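(* Let $\gamma_1$ be the type-1 greedy submodularity ratio of $f_{Pa}$ with respect to a run of Algorithm 2 (defined in the context). Then $$\gamma_1\ge\min_{j\in\{0,\dots,|\mathcal{Y}_2|\}}\frac{\lambda_2(F_p+H(\mathcal{Y}_2^j))\,\lambda_2(F_p+H(\{z_j\}\cup\mathcal{Y}_2^j))}{\lambda_1(F_p+H(\mathcal{Y}_2^j))\,\lambda_1(F_p+H(\{z_j\}\cup\mathcal{Y}_2^j))},$$ where, for each $j$, $z_j\in\arg\min_{y\in\bar{\mathcal{M}}\setminus\mathcal{Y}_2^j}\frac{\lambda_2(F_p+H(\{y\}\cup\mathcal{Y}_2^j))}{\lambda_1(F_p+H(\{y\}\cup\mathcal{Y}_2^j))}$.
   Context: For a symmetric positive semidefinite $2\times2$ matrix $P$, $\lambda_1(P)\ge\lambda_2(P)$ are its eigenvalues. Setting: networked SIR model on directed graph $\mathcal{G}=(\mathcal{V},\mathcal{E})$, $\mathcal{V}=[n]$, $\bar{\mathcal{N}}_i=\{j:(j,i)\in\mathcal{E}\}\cup\{i\}$, weights $a_{ij}\ge0$, sampling parameter $h$, dynamics $s_i[k+1]=s_i[k]-hs_i[k]\beta\sum_{j\in\bar{\mathcal{N}}_i}a_{ij}x_j[k]$, $x_i[k+1]=(1-h\delta)x_i[k]+hs_i[k]\beta\sum_{j\in\bar{\mathcal{N}}_i}a_{ij}x_j[k]$, $r_i[k+1]=r_i[k]+h\delta x_i[k]$, known initial condition, $\theta=[\beta\ \delta]^T$ with prior pdf $p(\theta)$; $x_i[k],r_i[k]\in[0,1)$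 viewed as functions of $\theta$. Given integers $1\le t_1\le t_2$, integers $N_i^x,N_i^r,\zeta_i,\eta_i\ge1$, costs $c_{k,i},b_{k,i}>0$, budget $B\ge0$. Ground set $\bar{\mathcal{M}}=\{(\hat x_i[k],l):i\in\mathcal{V},k\in\{t_1,\dots,t_2\},l\in[\zeta_i]\}\cup\{(\hat r_i[k],l):i\in\mathcal{V},k\in\{t_1,\dots,t_2\},l\in[\eta_i]\}$ with $c((\hat x_i[k],l))=c_{k,i}$, $c((\hat r_i[k],l))=b_{k,i}$, $c(\mathcal{Y})=\sum_{y\in\mathcal{Y}}c(y)$. $H_y=\mathbb{E}_\theta\big[\frac{N_i^x}{x_i[k](1-x_i[k])}\frac{\partial x_i[k]}{\partial\theta}(\frac{\partial x_i[k]}{\partial\theta})^T\big]$ for $y=(\hat x_i[k],l)$, analogously with $r$, $N_i^r$ for $y=(\hat r_i[k],l)$ (integrand $0$ where the state is $0$), $\mathbb{E}_\theta$ w.r.t. $p(\theta)$; $H_y\succeq0$; $H(\mathcal{Y})=\sum_{y\in\mathcal{Y}}H_y$. $F_p=\mathbb{E}_\theta[\nabla_\theta\ln p(\theta)\nabla_\theta\ln p(\theta)^T]\succ0$. $f_{Pa}(\mathcal{Y})=\mathrm{Tr}(F_p^{-1})-\mathrm{Tr}((F_p+H(\mathcal{Y}))^{-1})$. $\hat f_{Pa}$ is a set function approximating $f_{Pa}$ with $\hat f_{Pa}(\emptyset)=0$. Algorithm 2: (1) $\mathcal{Y}_1=\{y\}$ with $y\in\arg\max_{y\in\bar{\mathcal{M}}}\hat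 f_{Pa}(\{y\})$; (2) $\mathcal{Y}_2=\emptyset$, $\mathcal{C}=\bar{\mathcal{M}}$; (3) while $\mathcal{C}\ne\emptyset$: choose $y^\star\in\arg\max_{y\in\mathcal{C}}\frac{\hat f_{Pa}(\{y\}\cup\mathcal{Y}_2)-\hat f_{Pa}(\mathcal{Y}_2)}{c(y)}$; if $c(y^\star)+c(\mathcal{Y}_2)\le B$ add $y^\star$ to $\mathcal{Y}_2$; remove $y^\star$ from $\mathcal{C}$; (4) output the better of $\mathcal{Y}_1,\mathcal{Y}_2$ under $\hat f_{Pa}$. $\mathcal{Y}_2^j$ denotes the set of the first $j$ elements added to $\mathcal{Y}_2$ ($\mathcal{Y}_2^0=\emptyset$), $\mathcal{Y}_2$ the final set. The type-1 greedy submodularity ratio $\gamma_1$ is the largest real with $\sum_{y\in\mathcal{A}\setminus\mathcal{Y}_2^j}(f_{Pa}(\{y\}\cup\mathcal{Y}_2^j)-f_{Pa}(\mathcal{Y}_2^j))\ge\gamma_1(f_{Pa}(\mathcal{A}\cup\mathcal{Y}_2^j)-f_{Pa}(\mathcal{Y}_2^j))$ for all $\mathcal{A}\subseteq\bar{\mathcal{M}}$ and all $j\in\{0,\dots,|\mathcal{Y}_2|\}$. *)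

From HB Require Import structures.
From mathcomp Require Import all_boot all_order all_algebra.
From mathcomp Require Import reals.
Set Implicit Arguments. Unset Strict Implicit. Unset Printing Implicit Defensive.
Import Order.TTheory GRing.Theory Num.Theory.
Local Open Scope ring_scope.

Section Defs.
Variable R : realType.

Definition psd (P : 'M[R]_2) : Prop :=
  P^T = P /\ forall v : 'cV[R]_2, 0 <= (v^T *m P *m v) 0 0.
Definition pd (P : 'M[R]_2) : Prop :=
  P^T = P /\ forall v : 'cV[R]_2, v != 0 -> 0 < (v^T *m P *m v) 0 0.

(* eigenvalues lambda_1 >= lambda_2 of a symmetric 2x2 matrix
   (the two roots of its characteristic polynomial X^2 - tr X + det) *)
Definition lam1 (P : 'M[R]_2) : R :=
  (\tr P + Num.sqrt (\tr P ^+ 2 - 4 * \det P)) / 2.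
Definition lam2 (P : 'M[R]_2) : R :=
  (\tr P - Num.sqrt (\tr P ^+ 2 - 4 * \det P)) / 2.

Variable M : finType.

Definition HY (H : M -> 'M[R]_2) (Y : {set M}) : 'M[R]_2 := \sum_(y in Y) H y.

Definition fPa (Fp : 'M[R]_2) (H : M -> 'M[R]_2) (Y : {set M}) : R :=
  \tr (invmx Fp) - \tr (invmx (Fp + HY H Y)).

Definition csum (c : M -> R) (Y : {set M}) : R := \sum_(y in Y) c y.

(* update of Y_2 when y* is considered in step (3) *)
Definition step (c : M -> R) (B : R) (Y : {set M}) (y : M) : {set M} :=
  if c y + csum c Y <= B then y |: Y else Y.

(* s = sequence of the elements y* chosen (and removed from C) in step (3).
   greedy_valid C Y s : starting from candidate set C and current Y_2 = Y,
   s is a legal run of the while loop until C is empty. *)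
Fixpoint greedy_valid (fhat : {set M} -> R) (c : M -> R) (B : R)
    (C Y : {set M}) (s : seq M) : Prop :=
  match s with
  | [::] => C = set0
  | y :: s' =>
      [/\ y \in C,
          (forall y', y' \in C ->
             (fhat (y' |: Y) - fhat Y) / c y' <= (fhat (y |: Y) - fhat Y) / c y)
        & greedy_valid fhat c B (C :\ y) (step c B Y y) s']
  end.

Definition greedy_run fhat c B (s : seq M) : Prop :=
  greedy_valid fhat c B setT set0 s.

Fixpoint added (c : M -> R) (B : R) (Y : {set M}) (s : seq M) : seq M :=
  match s with
  | [::] => [::]
  | y :: s' => if c y + csum c Y <= B then y :: added c B (y |: Y) s'
               else added c B Y s'
  end.

Definition Y2seq c B (s : seq M) : seq M := added c B set0 s.

Definition Y2j c B (s : seq M) (j : nat) : {set M} :=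
  [set x in take j (Y2seq c B s)].

(* gamma satisfies the defining inequality of the type-1 greedy
   submodularity ratio of f w.r.t. the chain Y_2^0 ⊆ ... ⊆ Y_2^{|Y_2|} *)
Definition gsr1_ok (f : {set M} -> R) c B (s : seq M) (gamma : R) : Prop :=
  forall (A : {set M}) (j : nat), (j <= size (Y2seq c B s))%N ->
    gamma * (f (A :|: Y2j c B s j) - f (Y2j c B s j))
      <= \sum_(y in A :\: Y2j c B s j) (f (y |: Y2j c B s j) - f (Y2j c B s j)).

Definition is_gsr1 (f : {set M} -> R) c B s (gamma : R) : Prop :=
  gsr1_ok f c B s gamma /\ forall g, gsr1_ok f c B s g -> g <= gamma.

Definition eratio (Fp : 'M[R]_2) (H : M -> 'M[R]_2) (Y : {set M}) : R :=
  lam2 (Fp + HY H Y) / lam1 (Fp + HY H Y).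

End Defs.

From HB Require Import structures.
From mathcomp Require Import all_boot all_order all_algebra.
From mathcomp Require Import reals.
From mathcomp Require Import ring lra.
Import Order.TTheory GRing.Theory Num.Theory.
Local Open Scope ring_scope.

(* For P positive definite and Q positive semidefinite (2 x 2), write
   d_i = lam_i (P + Q) - lam_i P; these are >= 0 (Weyl) and add up to Tr Q, and
     Tr P^-1 - Tr (P + Q)^-1 = d_1 / (lam1 P lam1 (P + Q)) + d_2 / (lam2 P lam2 (P + Q)),
   so the decrease lies between Tr Q / (lam1 P lam1 (P + Q)) and Tr Q / (lam2 P lam2 (P + Q)).
   With P = F_p + H(Y_2^j), the upper bound for Q = H(A \ Y_2^j) splits into one term
   Tr H_y / (lam2 P lam2 (P + H(A \ Y_2^j))) <= Tr H_y / (lam2 P lam2 (P + H_y)) per y,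
   and the lower bound for Q = H_y turns this term into the marginal gain of y up to the
   factor lam2 P lam2 (P + H_y) / (lam1 P lam1 (P + H_y)), which is smallest for y = z_j. *)

Set Implicit Arguments.
Unset Strict Implicit.

Section Symmetric2x2.
Variable R : realType.
Implicit Types (X P Q : 'M[R]_2).

Lemma lift0_0 : lift (0 : 'I_2) 0 = 1. Proof. exact: val_inj. Qed.
Lemma lift1_0 : lift (1 : 'I_2) 0 = 0. Proof. exact: val_inj. Qed.

Lemma sum_ord2 (F : 'I_2 -> R) : \sum_i F i = F 0 + F 1.
Proof. by rewrite big_ord_recl big_ord1 lift0_0. Qed.

Lemma mxtrace2 X : \tr X = X 0 0 + X 1 1.
Proof. exact: sum_ord2. Qed.

Lemma det_mx2 X : \det X = X 0 0 * X 1 1 - X 0 1 * X 1 0.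
Proof.
rewrite (expand_det_row _ 0) sum_ord2 /cofactor !det_mx11 !mxE lift0_0 lift1_0.
by rewrite expr0 expr1; ring.
Qed.

Lemma mxtrace_invmx2 X : \det X != 0 -> \tr (invmx X) = \tr X / \det X.
Proof.
move=> detX; rewrite /invmx unitmxE unitfE detX mxtraceZ !mxtrace2 !mxE.
rewrite /cofactor !det_mx11 !mxE lift0_0 lift1_0 !exprD expr0 expr1.
by rewrite mulrNN !mul1r mulrC addrC.
Qed.

Lemma sym_mx2 X : X^T = X -> X 1 0 = X 0 1.
Proof. by move/(congr1 (fun A : 'M[R]_2 => A 1 0)); rewrite mxE => <-. Qed.

Definition col2 (x y : R) : 'cV[R]_2 := \col_i (if i == 0 then x else y).

Lemma quad_form_col2 X x y : X^T = X ->
  ((col2 x y)^T *m X *m col2 x y) 0 0 = x ^+ 2 * X 0 0 + 2 * x * y * X 0 1 + y ^+ 2 * X 1 1.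
Proof. by move/sym_mx2=> symX; rewrite !mxE !sum_ord2 !mxE !sum_ord2 !mxE /= symX; ring. Qed.

Lemma col2_neq0 x y : (x != 0) || (y != 0) -> col2 x y != 0.
Proof.
apply: contraTneq => xy0.
have := congr1 (fun w : 'cV[R]_2 => w 0 0) xy0; have := congr1 (fun w : 'cV[R]_2 => w 1 0) xy0.
by rewrite !mxE /= => -> ->; rewrite eqxx.
Qed.

Lemma psd_coef X : psd X ->
  [/\ X 1 0 = X 0 1, 0 <= X 0 0, 0 <= X 1 1 & X 0 1 ^+ 2 <= X 0 0 * X 1 1].
Proof.
case=> symX posX.
have q x y : 0 <= x ^+ 2 * X 0 0 + 2 * x * y * X 0 1 + y ^+ 2 * X 1 1.
  by rewrite -quad_form_col2.
move: (q 1 0) (q 0 1) (q (X 1 1) (- X 0 1)) (q (X 0 1) (- X 0 0)) (q 1 1) (q 1 (-1)).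
set a := X 0 0; set b := X 0 1; set d := X 1 1 => q10 q01 qd qa q11 q1N.
have a_ge0 : 0 <= a by nra.
have d_ge0 : 0 <= d by nra.
split; rewrite ?sym_mx2 // -subr_ge0.
have : 0 <= (a + d) * (a * d - b ^+ 2) by nra.
have [ad_gt0|ad_le0] := ltP 0 (a + d); first by rewrite pmulr_rge0.
have [a0 d0] : a = 0 /\ d = 0 by split; lra.
by rewrite a0 d0 in q11 q1N *; nra.
Qed.

Lemma pd_coef X : pd X -> [/\ X 1 0 = X 0 1, 0 < X 0 0 & 0 < \det X].
Proof.
case=> symX posX.
have q x y : (x != 0) || (y != 0) ->
    0 < x ^+ 2 * X 0 0 + 2 * x * y * X 0 1 + y ^+ 2 * X 1 1.
  by move=> xy0; rewrite -quad_form_col2 // posX // col2_neq0.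
have a_gt0 : 0 < X 0 0 by have := q 1 0; rewrite oner_neq0 => /(_ isT); nra.
have := q (X 0 1) (- X 0 0); rewrite oppr_eq0 (gt_eqF a_gt0) orbT => /(_ isT).
rewrite det_mx2 sym_mx2 // => qa; split; rewrite ?sym_mx2 //.
by rewrite -(pmulr_rgt0 _ a_gt0); nra.
Qed.

Lemma psd0 : psd (0 : 'M[R]_2).
Proof. by split=> [|v]; rewrite ?trmx0 // mulmx0 mul0mx mxE. Qed.

Lemma psdD P Q : psd P -> psd Q -> psd (P + Q).
Proof.
case=> symP posP [symQ posQ]; split; first by rewrite linearD /= symP symQ.
by move=> v; rewrite mulmxDr mulmxDl mxE addr_ge0.
Qed.

Lemma pdDr P Q : pd P -> psd Q -> pd (P + Q).
Proof.
case=> symP posP [symQ posQ]; split; first by rewrite linearD /= symP symQ.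
by move=> v v0; rewrite mulmxDr mulmxDl mxE ltr_wpDr ?posQ ?posP.
Qed.

Lemma mxtrace_psd_ge0 Q : psd Q -> 0 <= \tr Q.
Proof. by case/psd_coef=> _ ? ? _; rewrite mxtrace2 addr_ge0. Qed.
End Symmetric2x2.

Section Eigenvalues2x2.
Variable R : realType.
Implicit Types (X P Q : 'M[R]_2) (x y : R).

Definition norm2 x y : R := Num.sqrt (x ^+ 2 + y ^+ 2).

Lemma norm2_ge0 x y : 0 <= norm2 x y. Proof. exact: sqrtr_ge0. Qed.

Lemma sqr_norm2 x y : norm2 x y ^+ 2 = x ^+ 2 + y ^+ 2.
Proof. by rewrite sqr_sqrtr // addr_ge0 ?sqr_ge0. Qed.

Lemma norm2N x y : norm2 (- x) (- y) = norm2 x y.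
Proof. by rewrite /norm2 !sqrrN. Qed.

Lemma ler_of_sqr x y : 0 <= y -> x ^+ 2 <= y ^+ 2 -> x <= y.
Proof. by move=> y0 xy; nra. Qed.

Lemma norm2_triangle x1 y1 x2 y2 :
  norm2 (x1 + x2) (y1 + y2) <= norm2 x1 y1 + norm2 x2 y2.
Proof.
have n1 := norm2_ge0 x1 y1; have n2 := norm2_ge0 x2 y2.
have cauchy_schwarz : x1 * x2 + y1 * y2 <= norm2 x1 y1 * norm2 x2 y2.
  apply: ler_of_sqr (mulr_ge0 n1 n2) _.
  rewrite exprMn !sqr_norm2 -subr_ge0.
  have -> : (x1 ^+ 2 + y1 ^+ 2) * (x2 ^+ 2 + y2 ^+ 2) - (x1 * x2 + y1 * y2) ^+ 2
      = (x1 * y2 - x2 * y1) ^+ 2 by ring.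
  exact: sqr_ge0.
apply: ler_of_sqr; first exact: addr_ge0.
rewrite sqrrD !sqr_norm2; nra.
Qed.

Definition sqrt_discr X : R := Num.sqrt (\tr X ^+ 2 - 4 * \det X).

Lemma sqrt_discr_ge0 X : 0 <= sqrt_discr X. Proof. exact: sqrtr_ge0. Qed.

Lemma sqrt_discr_sym X : X 1 0 = X 0 1 -> sqrt_discr X = norm2 (X 0 0 - X 1 1) (2 * X 0 1).
Proof. by move=> symX; rewrite /sqrt_discr mxtrace2 det_mx2 symX; congr Num.sqrt; ring. Qed.

Lemma sqr_sqrt_discr X : X 1 0 = X 0 1 -> sqrt_discr X ^+ 2 = \tr X ^+ 2 - 4 * \det X.
Proof. by move=> symX; rewrite sqrt_discr_sym // sqr_norm2 mxtrace2 det_mx2 symX; ring. Qed.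

Lemma lam1_add_lam2 X : lam1 X + lam2 X = \tr X.
Proof. by rewrite /lam1 /lam2; field. Qed.

Lemma lam2_le_lam1 X : lam2 X <= lam1 X.
Proof. by rewrite /lam1 /lam2 -/(sqrt_discr X); have := sqrt_discr_ge0 X; lra. Qed.

Lemma lam1_mul_lam2 X : X 1 0 = X 0 1 -> lam1 X * lam2 X = \det X.
Proof.
move=> symX; have discrX := sqr_sqrt_discr symX.
rewrite /lam1 /lam2 -/(sqrt_discr X).
have -> : \det X = (\tr X ^+ 2 - sqrt_discr X ^+ 2) / 4 by rewrite discrX; field.
by field.
Qed.

Lemma pd_lam2_gt0 X : pd X -> 0 < lam2 X.
Proof.
case/pd_coef=> symX a_gt0 det_gt0.
have tr_gt0 : 0 < \tr X by rewrite mxtrace2; rewrite det_mx2 symX in det_gt0; nra.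
have := sqr_sqrt_discr symX; have := sqrt_discr_ge0 X.
by rewrite /lam2 -/(sqrt_discr X); nra.
Qed.

Lemma pd_lam1_gt0 X : pd X -> 0 < lam1 X.
Proof. by move/pd_lam2_gt0/lt_le_trans; apply; exact: lam2_le_lam1. Qed.

Lemma mxtrace_invmx_lam X : pd X -> \tr (invmx X) = (lam1 X)^-1 + (lam2 X)^-1.
Proof.
move=> pdX; have [symX _ det_gt0] := pd_coef pdX.
have l1 := pd_lam1_gt0 pdX; have l2 := pd_lam2_gt0 pdX.
rewrite mxtrace_invmx2 ?gt_eqF // -lam1_add_lam2 -lam1_mul_lam2 //.
by field; rewrite !gt_eqF.
Qed.

Lemma psd_norm2_le_mxtrace Q : psd Q -> norm2 (Q 0 0 - Q 1 1) (2 * Q 0 1) <= \tr Q.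
Proof.
case/psd_coef=> _ p_ge0 r_ge0 det_ge0.
apply: ler_of_sqr; first by rewrite mxtrace2 addr_ge0.
by rewrite sqr_norm2 mxtrace2; nra.
Qed.

Lemma sqrt_discr_addr_dist X Q : X 1 0 = X 0 1 -> psd Q ->
  `|sqrt_discr (X + Q) - sqrt_discr X| <= \tr Q.
Proof.
move=> symX psdQ; have [symQ _ _ _] := psd_coef psdQ.
have symXQ : (X + Q) 1 0 = (X + Q) 0 1 by rewrite !mxE symX symQ.
have normQ := psd_norm2_le_mxtrace psdQ.
rewrite !sqrt_discr_sym // !mxE.
set u1 := X 0 0 - X 1 1; set u2 := 2 * X 0 1.
set w1 := Q 0 0 - Q 1 1; set w2 := 2 * Q 0 1.
have -> : X 0 0 + Q 0 0 - (X 1 1 + Q 1 1) = u1 + w1 by rewrite /u1 /w1; ring.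
have -> : 2 * (X 0 1 + Q 0 1) = u2 + w2 by rewrite /u2 /w2; ring.
have le_uw := norm2_triangle u1 u2 w1 w2.
have := norm2_triangle (u1 + w1) (u2 + w2) (- w1) (- w2).
rewrite !addrK norm2N => le_u.
by rewrite ler_norml; apply/andP; split; lra.
Qed.

Lemma lam1_le_addr X Q : X 1 0 = X 0 1 -> psd Q -> lam1 X <= lam1 (X + Q).
Proof.
move=> symX psdQ; have := sqrt_discr_addr_dist symX psdQ.
by rewrite ler_norml /lam1 -!/(sqrt_discr _) mxtraceD => /andP[]; lra.
Qed.

Lemma lam2_le_addr X Q : X 1 0 = X 0 1 -> psd Q -> lam2 X <= lam2 (X + Q).
Proof.
move=> symX psdQ; have := sqrt_discr_addr_dist symX psdQ.
by rewrite ler_norml /lam2 -!/(sqrt_discr _) mxtraceD => /andP[]; lra.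
Qed.

Lemma mxtrace_lam_gain P Q : \tr Q = (lam1 (P + Q) - lam1 P) + (lam2 (P + Q) - lam2 P).
Proof. by have := lam1_add_lam2 P; have := lam1_add_lam2 (P + Q); rewrite mxtraceD; lra. Qed.

Lemma mxtrace_invmx_gain P Q : pd P -> psd Q ->
  \tr (invmx P) - \tr (invmx (P + Q)) =
    (lam1 (P + Q) - lam1 P) / (lam1 P * lam1 (P + Q))
  + (lam2 (P + Q) - lam2 P) / (lam2 P * lam2 (P + Q)).
Proof.
move=> pdP psdQ; have pdPQ := pdDr pdP psdQ.
have := pd_lam1_gt0 pdP; have := pd_lam1_gt0 pdPQ.
have := pd_lam2_gt0 pdP; have := pd_lam2_gt0 pdPQ.
by rewrite !mxtrace_invmx_lam // => ? ? ? ?; field; rewrite !gt_eqF.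
Qed.

Lemma mxtrace_invmx_gain_bounds P Q : pd P -> psd Q ->
  \tr Q / (lam1 P * lam1 (P + Q)) <= \tr (invmx P) - \tr (invmx (P + Q))
    <= \tr Q / (lam2 P * lam2 (P + Q)).
Proof.
move=> pdP psdQ; have pdPQ := pdDr pdP psdQ; have [symP _ _] := pd_coef pdP.
have d1 : 0 <= lam1 (P + Q) - lam1 P by rewrite subr_ge0 lam1_le_addr.
have d2 : 0 <= lam2 (P + Q) - lam2 P by rewrite subr_ge0 lam2_le_addr.
have w12 : (lam1 P * lam1 (P + Q))^-1 <= (lam2 P * lam2 (P + Q))^-1.
  have l2 := pd_lam2_gt0 pdP; have l2' := pd_lam2_gt0 pdPQ.
  rewrite lef_pV2 ?posrE ?(mulr_gt0 l2 l2') ?(mulr_gt0 (pd_lam1_gt0 pdP) (pd_lam1_gt0 pdPQ)) //.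
  exact: ler_pM (ltW l2) (ltW l2') (lam2_le_lam1 _) (lam2_le_lam1 _).
rewrite mxtrace_invmx_gain // (mxtrace_lam_gain P).
move: d1 d2 w12; set d1 := _ - lam1 P; set d2 := _ - lam2 P.
set w1 := _^-1; set w2 := _^-1 => d1_ge0 d2_ge0 w12.
by apply/andP; split; nra.
Qed.

Definition lam_ratio P P' : R := lam2 P * lam2 P' / (lam1 P * lam1 P').

Lemma lam_ratio_ge0 P P' : pd P -> pd P' -> 0 <= lam_ratio P P'.
Proof.
by move=> pdP pdP'; rewrite divr_ge0 // ltW // mulr_gt0 // (pd_lam1_gt0, pd_lam2_gt0).
Qed.

Lemma lam_ratio_gain_le P Q Q' (g : R) : pd P -> psd Q -> psd Q' -> 0 <= g ->
  g <= lam_ratio P (P + Q) ->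
  g * (\tr Q / (lam2 P * lam2 (P + Q + Q'))) <= \tr (invmx P) - \tr (invmx (P + Q)).
Proof.
move=> pdP psdQ psdQ' g_ge0 g_le; have pdPQ := pdDr pdP psdQ; have [symPQ _ _] := pd_coef pdPQ.
have /andP[gain_ge _] := mxtrace_invmx_gain_bounds pdP psdQ; apply: le_trans gain_ge.
move: g_le (lam2_le_addr symPQ psdQ') (mxtrace_psd_ge0 psdQ); rewrite /lam_ratio.
move: (pd_lam1_gt0 pdP) (pd_lam2_gt0 pdP) (pd_lam1_gt0 pdPQ) (pd_lam2_gt0 pdPQ).
move: (lam1 P) (lam2 P) (lam1 (P + Q)) (lam2 (P + Q)) (lam2 (P + Q + Q')) (\tr Q).
move=> a a' b b' c t a_gt0 a'_gt0 b_gt0 b'_gt0 g_le b'c t_ge0.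
have c_gt0 : 0 < c := lt_le_trans b'_gt0 b'c.
apply: le_trans (_ : g * (t / (a' * b')) <= _).
  by rewrite ler_wpM2l // ler_wpM2l // lef_pV2 ?posrE ?mulr_gt0 // ler_wpM2l // ltW.
apply: le_trans (ler_wpM2r (divr_ge0 t_ge0 (ltW (mulr_gt0 a'_gt0 b'_gt0))) g_le) _.
have -> : a' * b' / (a * b) * (t / (a' * b')) = t / (a * b) by field; rewrite !gt_eqF.
exact: lexx.
Qed.
End Eigenvalues2x2.

Section FisherGain.
Variables (R : realType) (M : finType) (Fp : 'M[R]_2) (H : M -> 'M[R]_2).
Hypotheses (pdFp : pd Fp) (psdH : forall y, psd (H y)).
Implicit Types (Y A : {set M}) (y z : M).

Lemma psd_HY Y : psd (HY H Y).
Proof. by apply: big_ind; [exact: psd0 | exact: psdD | move=> y _; exact: psdH]. Qed.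

Lemma pd_Fp_HY Y : pd (Fp + HY H Y).
Proof. exact: pdDr pdFp (psd_HY Y). Qed.

Lemma HY_setU1 y Y : y \notin Y -> HY H (y |: Y) = HY H Y + H y.
Proof. by move=> yY; rewrite /HY big_setU1 // addrC. Qed.

Lemma HY_setD1 y Y : y \in Y -> HY H Y = H y + HY H (Y :\ y).
Proof. exact: big_setD1. Qed.

Lemma HY_setUD Y A : HY H (A :|: Y) = HY H Y + HY H (A :\: Y).
Proof. by rewrite /HY (big_setID Y) /= setUC setUK setDUl setDv set0U. Qed.

Lemma mxtrace_HY Y : \tr (HY H Y) = \sum_(y in Y) \tr (H y).
Proof. exact: raddf_sum. Qed.

Lemma fPa_gain Y Y' :
  fPa Fp H Y' - fPa Fp H Y = \tr (invmx (Fp + HY H Y)) - \tr (invmx (Fp + HY H Y')).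
Proof. by rewrite /fPa; ring. Qed.

Section GreedyStep.
Variables (Y : {set M}) (z : M).
Hypothesis z_min : forall y, y \notin Y -> eratio Fp H (z |: Y) <= eratio Fp H (y |: Y).

Let P := Fp + HY H Y.

Lemma lam_ratio_setU1_min y : y \notin Y ->
  lam_ratio P (Fp + HY H (z |: Y)) <= lam_ratio P (Fp + HY H (y |: Y)).
Proof.
move=> yY; rewrite /lam_ratio -!(mulf_div (lam2 P)) ler_wpM2l ?z_min //.
have pdP : pd P := pd_Fp_HY Y.
by rewrite divr_ge0 // ltW // (pd_lam2_gt0, pd_lam1_gt0).
Qed.

Lemma fPa_greedy_ratio_step A (g : R) : 0 <= g -> g <= lam_ratio P (Fp + HY H (z |: Y)) ->
  g * (fPa Fp H (A :|: Y) - fPa Fp H Y)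
    <= \sum_(y in A :\: Y) (fPa Fp H (y |: Y) - fPa Fp H Y).
Proof.
move=> g_ge0 g_le; rewrite fPa_gain HY_setUD addrA -/P.
have /andP[_ gain_le] := mxtrace_invmx_gain_bounds (pd_Fp_HY Y) (psd_HY (A :\: Y)).
apply: le_trans (ler_wpM2l g_ge0 gain_le) _.
rewrite mxtrace_HY mulr_suml mulr_sumr; apply: ler_sum => y yAY.
have yY : y \notin Y by case/setDP: yAY.
rewrite fPa_gain -/P (HY_setD1 yAY) addrA HY_setU1 // addrA -/P.
apply: lam_ratio_gain_le => //; [exact: pd_Fp_HY | exact: psd_HY |].
apply: (le_trans g_le); apply: le_trans (lam_ratio_setU1_min yY) _.
by rewrite HY_setU1 // addrA.
Qed.
End GreedyStep.
End FisherGain.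

Theorem lemma4 (R : realType) (M : finType) (c : M -> R) (B : R)
    (fhat : {set M} -> R) (H : M -> 'M[R]_2) (Fp : 'M[R]_2)
    (s : seq M) (z : nat -> M) (gamma1 : R) :
  (forall y, 0 < c y) -> 0 <= B -> fhat set0 = 0 ->
  (forall y, psd (H y)) -> pd Fp ->
  greedy_run fhat c B s ->
  is_gsr1 (fPa Fp H) c B s gamma1 ->
  (forall j, (j <= size (Y2seq c B s))%N -> Y2j c B s j != setT ->
     z j \notin Y2j c B s j /\
     (forall y, y \notin Y2j c B s j ->
        eratio Fp H (z j |: Y2j c B s j) <= eratio Fp H (y |: Y2j c B s j))) ->
  \big[Num.min/1]_(j < (size (Y2seq c B s)).+1 | Y2j c B s j != setT)
     (lam2 (Fp + HY H (Y2j c B s j)) * lam2 (Fp + HY H (z j |: Y2j c B s j))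
      / (lam1 (Fp + HY H (Y2j c B s j)) * lam1 (Fp + HY H (z j |: Y2j c B s j))))
  <= gamma1.
Proof.
move=> _ _ _ psdH pdFp _ [_ gamma1_max] z_min.
apply: gamma1_max => A j j_le.
have [->|YjT] := eqVneq (Y2j c B s j) setT.
  by rewrite setUT setDT big_set0 subrr mulr0.
have [_ zj_min] := z_min j j_le YjT.
apply: (fPa_greedy_ratio_step pdFp psdH zj_min).
  by apply: le_bigmin => // i _; apply: lam_ratio_ge0; apply: pd_Fp_HY.
by rewrite (bigminD1 (Ordinal (j_le : j < _.+1)%N)) //= ge_min lexx.
Qed.
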